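(* Let $F_{ij}$ ($0\le i\le m$, $0\le j\le n$) be a dual-convex $m\times n$ net in $I^3$ and let $V_{ij}\in\mathbb R^3$ be vectors such that for each $0\le k<m$, $0\le l<n$ there is an infinitesimal isotropic congruence $V$ (depending on $k,l$) with $V_{ij}=V(F_{ij})$ for all $i\in\{k,k+1\}$, $j\in\{l,l+1\}$. Then $F_{ij}+tV_{ij}$ is a dual-convex $m\times n$ net for all $t$ sufficiently small in absolute value.
   Context: $I^3$ is $\mathbb{R}^3$ with coordinates $(x,y,z)$; a line or plane is isotropic if parallel to the $z$-axis. An infinitesimal isotropic congruence is a vector field $V(\mathbf x)=a\mathbf x+\mathbf b$ with $\mathbf b\in\mathbb R^3$ and $a=\begin{pmatrix}0&-\phi&0\\ \phi&0&0\\ c_1&c_2&0\end{pmatrix}$, $\phi,c_1,c_2\in\mathbb R$. An $m\times n$ net: points $F_{ij}$, $0\le i\le m,0\le j\le n$, with $F_{ij},F_{i+1,j},F_{i+1,j+1},F_{i,j+1}$ consecutive vertices of a convex planar quadrilateral (face $p_{ij}$) for all $0\le i<m,0\le j<n$. Boundary vertices: $i\in\{0,m\}$ or $j\in\{0,n\}$; consecutive faces around non-boundary $F_{ij}$: $p_{i-1,j-1},p_{i,j-1},p_{ij},p_{i-1,j}$. Convex 4-hedral angle with vertex $O$: union of rays from $O$ meeting a convex quadrilateral in a plane not through $O$; flat angles: rays through one side; admissible: isotropic line through $O$ meets its interior. Dual-convex: $m,n\ge2$ and at each non-boundary vertex the four consecutive face planes are the planes of four consecutive flat angles of an admissible convex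 4-hedral angle. *)

From Stdlib Require Import Reals Lra.
Open Scope R_scope.

(* Points / vectors of I^3 = R^3 with coordinates (x,y,z). *)
Record vec3 := V3 { vx : R; vy : R; vz : R }.

Definition vadd (u v : vec3) : vec3 := V3 (vx u + vx v) (vy u + vy v) (vz u + vz v).
Definition vsub (u v : vec3) : vec3 := V3 (vx u - vx v) (vy u - vy v) (vz u - vz v).
Definition vscale (a : R) (u : vec3) : vec3 := V3 (a * vx u) (a * vy u) (a * vz u).
Definition vdot (u v : vec3) : R := vx u * vx v + vy u * vy v + vz u * vz v.
Definition vcross (u v : vec3) : vec3 :=
  V3 (vy u * vz v - vz u * vy v) (vz u * vx v - vx u * vz v) (vx u * vy v - vy u * vx v).
Definition vzero : vec3 := V3 0 0 0.
(* unit vector of the z-axis (isotropic direction) *)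
Definition e3 : vec3 := V3 0 0 1.

Definition noncollinear (A B C : vec3) : Prop := vcross (vsub B A) (vsub C A) <> vzero.

Definition in_plane (A B C P : vec3) : Prop :=
  exists s u : R, P = vadd A (vadd (vscale s (vsub B A)) (vscale u (vsub C A))).

Definition same_plane (A B C A' B' C' : vec3) : Prop :=
  forall P, in_plane A B C P <-> in_plane A' B' C' P.

(* A, B, C, D are consecutive vertices of a (non-degenerate) convex planar
   quadrilateral: A, B, C are not collinear and the diagonals AC and BD meet
   at a point interior to both of them (this forces planarity and strict
   convexity). *)
Definition convex_quad (A B C D : vec3) : Prop :=
  noncollinear A B C /\
  exists s u : R, 0 < s < 1 /\ 0 < u < 1 /\
    vadd A (vscale s (vsub C A)) = vadd B (vscale u (vsub D B)).

Definition in_quad_region (A B C D P : vec3) : Prop :=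
  exists a b c d : R, 0 <= a /\ 0 <= b /\ 0 <= c /\ 0 <= d /\ a + b + c + d = 1 /\
    P = vadd (vscale a A) (vadd (vscale b B) (vadd (vscale c C) (vscale d D))).

Definition in_angle (O Q1 Q2 Q3 Q4 P : vec3) : Prop :=
  exists (lam : R) (X : vec3), 0 <= lam /\ in_quad_region Q1 Q2 Q3 Q4 X /\
    P = vadd O (vscale lam (vsub X O)).

Definition is_convex_4hedral_angle (O Q1 Q2 Q3 Q4 : vec3) : Prop :=
  convex_quad Q1 Q2 Q3 Q4 /\ ~ in_plane Q1 Q2 Q3 O.

Definition in_interior (S : vec3 -> Prop) (P : vec3) : Prop :=
  exists eps : R, 0 < eps /\
    forall P', vdot (vsub P' P) (vsub P' P) < eps * eps -> S P'.

Definition admissible_angle (O Q1 Q2 Q3 Q4 : vec3) : Prop :=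
  exists t : R, in_interior (in_angle O Q1 Q2 Q3 Q4) (vadd O (vscale t e3)).

(* Nets: F i j for 0 <= i <= m, 0 <= j <= n (values outside are irrelevant). *)
Definition net := nat -> nat -> vec3.

Definition is_net (m n : nat) (F : net) : Prop :=
  forall i j, (i < m)%nat -> (j < n)%nat ->
    convex_quad (F i j) (F (S i) j) (F (S i) (S j)) (F i (S j)).

Definition face_plane_eq (F : net) (i j : nat) (A B C : vec3) : Prop :=
  same_plane (F i j) (F (S i) j) (F (S i) (S j)) A B C.

(* At the non-boundary vertex F_ij (i,j >= 1), the four consecutive face
   planes p_{i-1,j-1}, p_{i,j-1}, p_{ij}, p_{i-1,j} are the planes of four
   consecutive flat angles of an admissible convex 4-hedral angle. *)
Definition dual_convex_at (F : net) (i j : nat) : Prop :=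
  exists O Q1 Q2 Q3 Q4 : vec3,
    is_convex_4hedral_angle O Q1 Q2 Q3 Q4 /\ admissible_angle O Q1 Q2 Q3 Q4 /\
    face_plane_eq F (pred i) (pred j) O Q1 Q2 /\
    face_plane_eq F i (pred j) O Q2 Q3 /\
    face_plane_eq F i j O Q3 Q4 /\
    face_plane_eq F (pred i) j O Q4 Q1.

Definition dual_convex_net (m n : nat) (F : net) : Prop :=
  is_net m n F /\ (2 <= m)%nat /\ (2 <= n)%nat /\
  forall i j, (0 < i < m)%nat -> (0 < j < n)%nat -> dual_convex_at F i j.

(* Infinitesimal isotropic congruence V(x) = a x + b with
   a = [[0,-phi,0],[phi,0,0],[c1,c2,0]]. *)
Definition iso_congruence (phi c1 c2 : R) (b : vec3) (x : vec3) : vec3 :=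
  vadd (V3 (- phi * vy x) (phi * vx x) (c1 * vx x + c2 * vy x)) b.

(* Around an interior vertex F_ij the four face planes carry the flat angles of an
   admissible convex 4-hedral angle; its apex is F_ij itself and its edges pass through
   the four neighbours of F_ij.  Up to positive rescaling of the edges, such an angle is
   described by its edge directions d1..d4, and convexity and admissibility become finitely
   many strict sign conditions on 3x3 determinants built from d1..d4 and the isotropic
   vector e3.  On each face, x + t V(x) is an affine map whose linear part has determinant
   1 + t^2 phi^2 > 0: it keeps faces convex and face planes planar, and moves the edge
   directions at a vertex polynomially in t.  Strict inequalities persist for small t, and
   there are finitely many vertices. *)

From Stdlib Require Import Reals Lra Lia.
Open Scope R_scope.

Definition det3 (a b c : vec3) : R := vdot (vcross a b) c.

Ltac vunfold := unfold det3, vdot, vcross, vadd, vsub, vscale, vzero, e3 in *; simpl in *.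

Lemma vec3_ext (u v : vec3) : vx u = vx v -> vy u = vy v -> vz u = vz v -> u = v.
Proof. destruct u, v; simpl; intros -> -> ->; reflexivity. Qed.

Lemma vec3_coords (u v : vec3) : u = v -> vx u = vx v /\ vy u = vy v /\ vz u = vz v.
Proof. intros ->; auto. Qed.

Ltac vext := apply vec3_ext; vunfold.

Ltac vcoords :=
  repeat match goal with
  | H : @eq vec3 _ _ |- _ => apply vec3_coords in H; destruct H as [? [? ?]]
  end; vunfold.

Lemma vshift0 (d w : vec3) : vadd d (vscale 0 w) = d.
Proof. destruct d; vext; ring. Qed.

Lemma vdot_ge0 (d : vec3) : 0 <= vdot d d.
Proof. vunfold; nra. Qed.

Lemma vdot_eq0 (d : vec3) : vdot d d = 0 -> d = vzero.
Proof. vunfold; intros H; apply vec3_ext; simpl; nra. Qed.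

Lemma cauchy_schwarz (d w : vec3) : vdot d w * vdot d w <= vdot d d * vdot w w.
Proof.
  assert (E : vdot d d * vdot w w - vdot d w * vdot d w = vdot (vcross d w) (vcross d w))
    by (vunfold; ring).
  pose proof (vdot_ge0 (vcross d w)); lra.
Qed.

Lemma cramer (a b c v : vec3) : det3 a b c <> 0 ->
  v = vadd (vscale (det3 v b c / det3 a b c) a)
      (vadd (vscale (det3 a v c / det3 a b c) b) (vscale (det3 a b v / det3 a b c) c)).
Proof. intros H; vext; field; exact H. Qed.

Lemma span_inter (a b c p : vec3) (x y x' y' : R) : det3 a b c <> 0 ->
  p = vadd (vscale x a) (vscale y b) -> p = vadd (vscale x' b) (vscale y' c) -> p = vscale y b.
Proof.
  intros HD E E'.
  assert (Hx : x * det3 a b c = 0).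
  { transitivity (vdot p (vcross b c)); [rewrite E | rewrite E']; vunfold; ring. }
  apply Rmult_integral in Hx as [-> | Hx]; [|contradiction].
  rewrite E; vext; ring.
Qed.

Definition near0 (P : R -> Prop) : Prop :=
  exists d, 0 < d /\ forall t, Rabs t < d -> P t.

Lemma near0_impl (P Q : R -> Prop) : (forall t, P t -> Q t) -> near0 P -> near0 Q.
Proof. intros H [d [Hd HP]]; exists d; split; auto. Qed.

Lemma near0_and (P Q : R -> Prop) : near0 P -> near0 Q -> near0 (fun t => P t /\ Q t).
Proof.
  intros [d1 [Hd1 H1]] [d2 [Hd2 H2]]. exists (Rmin d1 d2). split.
  - now apply Rmin_glb_lt.
  - intros t Ht. split; [apply H1 | apply H2];
      eapply Rlt_le_trans; eauto; [apply Rmin_l | apply Rmin_r].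
Qed.

Lemma near0_forall_lt (n : nat) (P : nat -> R -> Prop) :
  (forall i, (i < n)%nat -> near0 (P i)) -> near0 (fun t => forall i, (i < n)%nat -> P i t).
Proof.
  induction n as [|n IH]; intros H.
  - exists 1; split; [lra | intros; lia].
  - apply near0_impl with (fun t => (forall i, (i < n)%nat -> P i t) /\ P n t).
    + intros t [Hlt Hn] i Hi.
      destruct (Nat.eq_dec i n) as [->|]; [exact Hn | apply Hlt; lia].
    + apply near0_and; [apply IH; intros i Hi |]; apply H; lia.
Qed.

Lemma near0_pos (f : R -> R) : continuity_pt f 0 -> 0 < f 0 -> near0 (fun t => 0 < f t).
Proof.
  intros Hc Hf. destruct (Hc (f 0) Hf) as [d [Hd Hnear]].
  exists d; split; auto. intros t Ht.
  destruct (Req_dec t 0) as [->|Hne]; auto.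
  assert (Hdist : R_dist (f t) (f 0) < f 0).
  { apply Hnear. split; [split; [exact I | auto] |].
    simpl; unfold R_dist; rewrite Rminus_0_r; exact Ht. }
  unfold R_dist in Hdist; apply Rabs_def2 in Hdist; lra.
Qed.

Definition iso_motion (phi c1 c2 : R) (b : vec3) (t : R) (x : vec3) : vec3 :=
  vadd x (vscale t (iso_congruence phi c1 c2 b x)).

Section IsoMotion.
Variables (phi c1 c2 : R) (b : vec3) (t : R).
Local Notation A := (iso_motion phi c1 c2 b t).

Lemma iso_motion_plane (X Y Z : vec3) (s u : R) :
  A (vadd X (vadd (vscale s (vsub Y X)) (vscale u (vsub Z X)))) =
  vadd (A X) (vadd (vscale s (vsub (A Y) (A X))) (vscale u (vsub (A Z) (A X)))).
Proof. unfold iso_motion, iso_congruence; vext; ring. Qed.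

Lemma iso_motion_line (X Y : vec3) (s : R) :
  A (vadd X (vscale s (vsub Y X))) = vadd (A X) (vscale s (vsub (A Y) (A X))).
Proof. unfold iso_motion, iso_congruence; vext; ring. Qed.

Lemma in_plane_iso_motion (X Y Z P : vec3) :
  in_plane X Y Z P -> in_plane (A X) (A Y) (A Z) (A P).
Proof. intros [s [u ->]]; exists s, u; apply iso_motion_plane. Qed.

Lemma same_plane_iso_motion (X Y Z X' Y' Z' : vec3) :
  same_plane X Y Z X' Y' Z' -> same_plane (A X) (A Y) (A Z) (A X') (A Y') (A Z').
Proof.
  intros H P; split; intros [s [u ->]]; rewrite <- iso_motion_plane;
    apply in_plane_iso_motion, H; exists s, u; reflexivity.
Qed.

(* Cofactor identity for the linear part I + t a, whose determinant is 1 + t^2 phi^2. *)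
Lemma iso_motion_normal (X Y Z W : vec3) :
  vdot (vcross (vsub (A Y) (A X)) (vsub (A Z) (A X)))
       (vadd W (vscale t (V3 (- phi * vy W) (phi * vx W) (c1 * vx W + c2 * vy W))))
  = (1 + t * t * phi * phi) * vdot (vcross (vsub Y X) (vsub Z X)) W.
Proof. unfold iso_motion, iso_congruence; vunfold; ring. Qed.

Lemma noncollinear_iso_motion (X Y Z : vec3) :
  noncollinear X Y Z -> noncollinear (A X) (A Y) (A Z).
Proof.
  intros Hnc E; apply Hnc, vdot_eq0.
  pose proof (iso_motion_normal X Y Z (vcross (vsub Y X) (vsub Z X))) as K.
  rewrite E in K.
  apply (Rmult_eq_reg_l (1 + t * t * phi * phi)); [| nra].
  rewrite <- K; vunfold; ring.
Qed.

Lemma convex_quad_iso_motion (X Y Z W : vec3) :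
  convex_quad X Y Z W -> convex_quad (A X) (A Y) (A Z) (A W).
Proof.
  intros [Hnc [s [u [Hs [Hu E]]]]]. split; [now apply noncollinear_iso_motion |].
  exists s, u; split; [exact Hs | split; [exact Hu |]].
  rewrite <- !iso_motion_line; f_equal; exact E.
Qed.

End IsoMotion.

Lemma ratio_bounds (x y : R) : 0 < x -> 0 < y -> 0 < y / (x + y) < 1.
Proof.
  intros Hx Hy. split; [apply Rdiv_lt_0_compat; lra |].
  apply (Rmult_lt_reg_r (x + y)); [lra |].
  unfold Rdiv; rewrite Rmult_assoc, Rinv_l; lra.
Qed.

Lemma div_pos_of_mul_pos (x D : R) : 0 < x * D -> 0 < x / D.
Proof.
  intros H. assert (HD : D <> 0) by (intros ->; lra).
  replace (x / D) with (x * D / (D * D)) by (field; exact HD).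
  apply Rdiv_lt_0_compat; [exact H | exact (Rsqr_pos_lt D HD)].
Qed.

Lemma pos_of_scaled (u k x D : R) : 0 < u -> 0 < k -> 0 < D * D -> u * x = k * D -> 0 < x * D.
Proof. intros Hu Hk HD E. assert (0 < u * (x * D)) by (rewrite <- Rmult_assoc, E; nra). nra. Qed.

Lemma vdot_small (p w : vec3) (e S : R) : 0 < e -> 1 + vdot w w <= S ->
  vdot p p < e / S * (e / S) -> Rabs (vdot p w) < e.
Proof.
  intros He HS Hp.
  pose proof (cauchy_schwarz p w). pose proof (vdot_ge0 p). pose proof (vdot_ge0 w).
  assert (HS0 : 0 < S) by lra.
  set (q := e / S) in *. assert (Eq : e = q * S) by (unfold q; field; lra).
  assert (Hq : 0 < q) by (unfold q; apply Rdiv_lt_0_compat; lra).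
  assert (vdot p p * vdot w w <= q * q * vdot w w) by (apply Rmult_le_compat_r; lra).
  assert (q * q * vdot w w <= q * q * (S - 1)) by (apply Rmult_le_compat_l; nra).
  assert (q * q * (S - 1) < q * q * (S * S)) by (apply Rmult_lt_compat_l; nra).
  assert (Hsq : vdot p w * vdot p w < e * e) by (rewrite Eq; nra).
  pose proof (Rsqr_lt_abs_0 _ _ Hsq) as Habs. rewrite (Rabs_right e) in Habs; lra.
Qed.

Definition cone_point (O : vec3) (m1 m2 m3 m4 : R) (d1 d2 d3 d4 : vec3) : vec3 :=
  vadd O (vadd (vscale m1 d1) (vadd (vscale m2 d2) (vadd (vscale m3 d3) (vscale m4 d4)))).

Lemma in_angle_cone_point (O Q1 Q2 Q3 Q4 : vec3) (m1 m2 m3 m4 : R) :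
  0 <= m1 -> 0 <= m2 -> 0 <= m3 -> 0 <= m4 ->
  in_angle O Q1 Q2 Q3 Q4
    (cone_point O m1 m2 m3 m4 (vsub Q1 O) (vsub Q2 O) (vsub Q3 O) (vsub Q4 O)).
Proof.
  intros H1 H2 H3 H4. unfold cone_point.
  destruct (Req_dec (m1 + m2 + m3 + m4) 0) as [HL | HL].
  - assert (m1 = 0) by lra; assert (m2 = 0) by lra; assert (m3 = 0) by lra;
      assert (m4 = 0) by lra; subst.
    exists 0, Q1. split; [lra | split].
    + exists 1, 0, 0, 0. repeat split; try lra. vext; ring.
    + vext; ring.
  - set (L := m1 + m2 + m3 + m4) in *.
    assert (HL0 : 0 < L) by (unfold L in *; lra).
    assert (Hw : forall m, 0 <= m -> 0 <= m / L)
      by (intros m Hm; apply Rmult_le_pos; [lra | left; apply Rinv_0_lt_compat; lra]).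
    exists L, (vadd (vscale (m1 / L) Q1)
                (vadd (vscale (m2 / L) Q2) (vadd (vscale (m3 / L) Q3) (vscale (m4 / L) Q4)))).
    split; [lra | split].
    + exists (m1 / L), (m2 / L), (m3 / L), (m4 / L).
      repeat split; auto. unfold L; field; exact HL.
    + unfold L; vext; field; exact HL.
Qed.

Lemma cone_point_interior (O Q1 Q2 Q3 Q4 : vec3) (b1 b2 b3 b4 : R) :
  det3 (vsub Q1 O) (vsub Q2 O) (vsub Q3 O) <> 0 ->
  0 < b1 -> 0 < b2 -> 0 < b3 -> 0 < b4 ->
  in_interior (in_angle O Q1 Q2 Q3 Q4)
    (cone_point O b1 b2 b3 b4 (vsub Q1 O) (vsub Q2 O) (vsub Q3 O) (vsub Q4 O)).
Proof.
  intros HD H1 H2 H3 H4.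
  set (q1 := vsub Q1 O) in *; set (q2 := vsub Q2 O) in *;
    set (q3 := vsub Q3 O) in *; set (q4 := vsub Q4 O) in *.
  set (D := det3 q1 q2 q3) in *.
  set (w1 := vcross q2 q3); set (w2 := vcross q3 q1); set (w3 := vcross q1 q2).
  set (m := Rmin b1 (Rmin b2 b3)).
  assert (Hm : 0 < m /\ m <= b1 /\ m <= b2 /\ m <= b3).
  { unfold m; repeat split.
    - repeat apply Rmin_glb_lt; assumption.
    - apply Rmin_l.
    - eapply Rle_trans; [apply Rmin_r | apply Rmin_l].
    - eapply Rle_trans; [apply Rmin_r | apply Rmin_r]. }
  set (S := 1 + vdot w1 w1 + vdot w2 w2 + vdot w3 w3).
  pose proof (vdot_ge0 w1); pose proof (vdot_ge0 w2); pose proof (vdot_ge0 w3).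
  assert (HaD : 0 < Rabs D) by (apply Rabs_pos_lt; exact HD).
  exists (m * Rabs D / S). split; [apply Rdiv_lt_0_compat; unfold S; nra |].
  intros P HP.
  set (p := vsub P (cone_point O b1 b2 b3 b4 q1 q2 q3 q4)) in *.
  (* The radius keeps the Cramer coordinates of p in the basis q1 q2 q3 below min b_k. *)
  assert (Hcoord : forall w, 1 + vdot w w <= S -> Rabs (vdot p w / D) < m).
  { intros w Hw. unfold Rdiv; rewrite Rabs_mult, Rabs_inv.
    apply (Rmult_lt_reg_r (Rabs D)); [exact HaD |].
    rewrite Rmult_assoc, Rinv_l, Rmult_1_r by lra.
    apply (vdot_small _ _ _ S); [nra | exact Hw | exact HP]. }
  assert (G1 := Hcoord w1 ltac:(unfold S; lra)).
  assert (G2 := Hcoord w2 ltac:(unfold S; lra)).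
  assert (G3 := Hcoord w3 ltac:(unfold S; lra)).
  apply Rabs_def2 in G1, G2, G3.
  replace P with (cone_point O (b1 + vdot p w1 / D) (b2 + vdot p w2 / D) (b3 + vdot p w3 / D) b4
                    q1 q2 q3 q4).
  { apply in_angle_cone_point; lra. }
  pose proof (cramer q1 q2 q3 p HD) as Hc.
  replace (det3 p q2 q3) with (vdot p w1) in Hc by (unfold w1; vunfold; ring).
  replace (det3 q1 p q3) with (vdot p w2) in Hc by (unfold w2; vunfold; ring).
  replace (det3 q1 q2 p) with (vdot p w3) in Hc by (unfold w3; vunfold; ring).
  assert (Hp : p = vsub P (cone_point O b1 b2 b3 b4 q1 q2 q3 q4)) by reflexivity.
  fold D in Hc.
  set (g1 := vdot p w1 / D) in *; set (g2 := vdot p w2 / D) in *; set (g3 := vdot p w3 / D) in *.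
  clearbody g1 g2 g3 p q1 q2 q3 q4.
  unfold cone_point in *. vcoords. vext; lra.
Qed.

Lemma apex_off_plane_iff (O Q1 Q2 Q3 : vec3) :
  noncollinear Q1 Q2 Q3 /\ ~ in_plane Q1 Q2 Q3 O <->
  det3 (vsub Q1 O) (vsub Q2 O) (vsub Q3 O) <> 0.
Proof.
  assert (Edet : det3 (vsub Q1 O) (vsub Q2 O) (vsub Q3 O) =
                 vdot (vcross (vsub Q2 Q1) (vsub Q3 Q1)) (vsub Q1 O)) by (vunfold; ring).
  split.
  - intros [Hnc Hout] HD. apply Hout.
    pose (nrm := vcross (vsub Q2 Q1) (vsub Q3 Q1)).
    assert (Hn : det3 (vsub Q2 Q1) (vsub Q3 Q1) nrm <> 0) by (intro E; apply Hnc, vdot_eq0, E).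
    pose proof (cramer _ _ _ (vsub O Q1) Hn) as Hc.
    assert (H0 : det3 (vsub Q2 Q1) (vsub Q3 Q1) (vsub O Q1) = 0).
    { transitivity (- det3 (vsub Q1 O) (vsub Q2 O) (vsub Q3 O)); [vunfold; ring | rewrite HD; ring]. }
    rewrite H0, Rdiv_0_l in Hc.
    set (s := det3 (vsub O Q1) (vsub Q3 Q1) nrm / det3 (vsub Q2 Q1) (vsub Q3 Q1) nrm) in Hc.
    set (u := det3 (vsub Q2 Q1) (vsub O Q1) nrm / det3 (vsub Q2 Q1) (vsub Q3 Q1) nrm) in Hc.
    exists s, u. clearbody s u nrm. vcoords; vext; lra.
  - intros HD; split.
    + intros E; apply HD; rewrite Edet, E; vunfold; ring.
    + intros [s [u E]]; apply HD; rewrite E; vunfold; ring.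
Qed.

(* The four determinants
   are the coefficients of the identity
     det(d2,d3,d4) d1 + det(d1,d2,d4) d3 = det(d1,d3,d4) d2 + det(d1,d2,d3) d4,
   and equal signs say that the two diagonal planes cross inside the angle. *)
Definition convex_frame (d1 d2 d3 d4 : vec3) : Prop :=
  0 < det3 d1 d2 d3 * det3 d1 d2 d3 /\
  0 < det3 d2 d3 d4 * det3 d1 d2 d3 /\
  0 < det3 d1 d3 d4 * det3 d1 d2 d3 /\
  0 < det3 d1 d2 d4 * det3 d1 d2 d3.

(* [t0 e3 - b4 d4] has positive coordinates (Cramer's rule) in the basis d1 d2 d3, i.e.
   the isotropic vector t0 e3 is a positive combination of all four directions. *)
Definition admissible_frame (d1 d2 d3 d4 : vec3) (t0 b4 : R) : Prop :=
  0 < b4 /\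
  0 < det3 (vsub (vscale t0 e3) (vscale b4 d4)) d2 d3 * det3 d1 d2 d3 /\
  0 < det3 d1 (vsub (vscale t0 e3) (vscale b4 d4)) d3 * det3 d1 d2 d3 /\
  0 < det3 d1 d2 (vsub (vscale t0 e3) (vscale b4 d4)) * det3 d1 d2 d3.

Lemma convex_frame_det3_neq0 (d1 d2 d3 d4 : vec3) : convex_frame d1 d2 d3 d4 ->
  det3 d1 d2 d3 <> 0 /\ det3 d2 d3 d4 <> 0 /\ det3 d3 d4 d1 <> 0 /\ det3 d4 d1 d2 <> 0.
Proof.
  intros [H1 [H2 [H3 H4]]].
  replace (det3 d3 d4 d1) with (det3 d1 d3 d4) by (vunfold; ring).
  replace (det3 d4 d1 d2) with (det3 d1 d2 d4) by (vunfold; ring).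
  repeat split; intros E; rewrite E in *; lra.
Qed.

Lemma convex_quad_frame (O Q1 Q2 Q3 Q4 : vec3) :
  convex_quad Q1 Q2 Q3 Q4 -> det3 (vsub Q1 O) (vsub Q2 O) (vsub Q3 O) <> 0 ->
  convex_frame (vsub Q1 O) (vsub Q2 O) (vsub Q3 O) (vsub Q4 O).
Proof.
  intros [_ [s [u [Hs [Hu E]]]]] HD.
  set (q1 := vsub Q1 O); set (q2 := vsub Q2 O); set (q3 := vsub Q3 O); set (q4 := vsub Q4 O).
  assert (E4 : vscale u q4 = vsub (vadd (vscale (1 - s) q1) (vscale s q3)) (vscale (1 - u) q2))
    by (unfold q1, q2, q3, q4; vcoords; vext; lra).
  unfold convex_frame; fold q1 q2 q3 in HD. set (D := det3 q1 q2 q3) in *.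
  assert (HDD : 0 < D * D) by exact (Rsqr_pos_lt D HD).
  assert (K : forall x y, det3 x y (vscale u q4) = u * det3 x y q4) by (intros; vunfold; ring).
  split; [exact HDD | repeat split].
  - apply (pos_of_scaled u (1 - s)); try lra.
    rewrite <- K, E4; unfold D; vunfold; ring.
  - apply (pos_of_scaled u (1 - u)); try lra.
    rewrite <- K, E4; unfold D; vunfold; ring.
  - apply (pos_of_scaled u s); try lra.
    rewrite <- K, E4; unfold D; vunfold; ring.
Qed.

Lemma interior_angle_cone_point (O Q1 Q2 Q3 Q4 P : vec3) :
  in_interior (in_angle O Q1 Q2 Q3 Q4) P ->
  exists b1 b2 b3 b4, 0 < b1 /\ 0 < b2 /\ 0 < b3 /\ 0 < b4 /\
    P = cone_point O b1 b2 b3 b4 (vsub Q1 O) (vsub Q2 O) (vsub Q3 O) (vsub Q4 O).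
Proof.
  intros [eps [Heps Hint]].
  (* Move P slightly backwards along the sum s of the edges: adding back eta s then makes
     every coefficient at least eta. *)
  set (s := vadd (vsub Q1 O) (vadd (vsub Q2 O) (vadd (vsub Q3 O) (vsub Q4 O)))).
  pose proof (vdot_ge0 s).
  set (eta := eps / (1 + vdot s s)).
  assert (Heta : 0 < eta) by (apply Rdiv_lt_0_compat; lra).
  assert (Hee : eta * (1 + vdot s s) = eps) by (unfold eta; field; lra).
  destruct (Hint (vsub P (vscale eta s)))
    as [lam [X [Hlam [[a [b [c [d [Ha [Hb [Hc [Hd [Hsum HX]]]]]]]]] HP]]]].
  { replace (vdot (vsub (vsub P (vscale eta s)) P) (vsub (vsub P (vscale eta s)) P))
      with (eta * eta * vdot s s) by (vunfold; ring).
    rewrite <- Hee; nra. }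
  exists (lam * a + eta), (lam * b + eta), (lam * c + eta), (lam * d + eta).
  repeat split; try nra.
  subst X. unfold s, cone_point in *. clearbody eta. vcoords; vext; nra.
Qed.

Lemma frame_of_angle (O Q1 Q2 Q3 Q4 : vec3) :
  is_convex_4hedral_angle O Q1 Q2 Q3 Q4 -> admissible_angle O Q1 Q2 Q3 Q4 ->
  convex_frame (vsub Q1 O) (vsub Q2 O) (vsub Q3 O) (vsub Q4 O) /\
  exists t0 b4, admissible_frame (vsub Q1 O) (vsub Q2 O) (vsub Q3 O) (vsub Q4 O) t0 b4.
Proof.
  intros [Hq Hout] [t0 Hint].
  assert (HD : det3 (vsub Q1 O) (vsub Q2 O) (vsub Q3 O) <> 0)
    by (apply apex_off_plane_iff; split; [apply Hq | exact Hout]).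
  split; [exact (convex_quad_frame O Q1 Q2 Q3 Q4 Hq HD) |].
  destruct (interior_angle_cone_point _ _ _ _ _ _ Hint)
    as [b1 [b2 [b3 [b4 [H1 [H2 [H3 [H4 HP]]]]]]]].
  exists t0, b4.
  set (q1 := vsub Q1 O) in *; set (q2 := vsub Q2 O) in *;
    set (q3 := vsub Q3 O) in *; set (q4 := vsub Q4 O) in *.
  assert (Hv : vsub (vscale t0 e3) (vscale b4 q4) =
               vadd (vscale b1 q1) (vadd (vscale b2 q2) (vscale b3 q3))).
  { unfold cone_point in HP. clearbody q1 q2 q3 q4. vcoords; vext; lra. }
  assert (HDD : 0 < det3 q1 q2 q3 * det3 q1 q2 q3) by exact (Rsqr_pos_lt _ HD).
  unfold admissible_frame; rewrite Hv.
  split; [exact H4 | repeat split].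
  - apply (pos_of_scaled 1 b1); try lra; vunfold; ring.
  - apply (pos_of_scaled 1 b2); try lra; vunfold; ring.
  - apply (pos_of_scaled 1 b3); try lra; vunfold; ring.
Qed.

Lemma convex_angle_of_relation (O d1 d2 d3 d4 : vec3) (a1 a2 a3 a4 : R) :
  0 < a1 -> 0 < a2 -> 0 < a3 -> 0 < a4 -> det3 d1 d2 d3 <> 0 ->
  vadd (vscale a1 d1) (vscale a3 d3) = vadd (vscale a2 d2) (vscale a4 d4) ->
  is_convex_4hedral_angle O (vadd O (vscale (a1 + a3) d1)) (vadd O (vscale (a2 + a4) d2))
    (vadd O (vscale (a1 + a3) d3)) (vadd O (vscale (a2 + a4) d4)).
Proof.
  intros H1 H2 H3 H4 HD Hrel.
  assert (Hdet : det3 (vsub (vadd O (vscale (a1 + a3) d1)) O) (vsub (vadd O (vscale (a2 + a4) d2)) O)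
                      (vsub (vadd O (vscale (a1 + a3) d3)) O) <> 0).
  { replace (det3 _ _ _) with ((a1 + a3) * (a2 + a4) * (a1 + a3) * det3 d1 d2 d3)
      by (vunfold; ring).
    repeat apply Rmult_integral_contrapositive_currified; lra. }
  apply apex_off_plane_iff in Hdet as [Hnc Hout].
  split; [split; [exact Hnc |] | exact Hout].
  exists (a3 / (a1 + a3)), (a4 / (a2 + a4)).
  split; [apply ratio_bounds; lra | split; [apply ratio_bounds; lra |]].
  transitivity (vadd O (vadd (vscale a1 d1) (vscale a3 d3))); [vext; field; lra |].
  rewrite Hrel; vext; field; lra.
Qed.

Lemma angle_of_frame (d1 d2 d3 d4 : vec3) (t0 b4 : R) (O : vec3) :
  convex_frame d1 d2 d3 d4 -> admissible_frame d1 d2 d3 d4 t0 b4 ->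
  exists c1 c2 c3 c4, 0 < c1 /\ 0 < c2 /\ 0 < c3 /\ 0 < c4 /\
    is_convex_4hedral_angle O (vadd O (vscale c1 d1)) (vadd O (vscale c2 d2))
      (vadd O (vscale c3 d3)) (vadd O (vscale c4 d4)) /\
    admissible_angle O (vadd O (vscale c1 d1)) (vadd O (vscale c2 d2))
      (vadd O (vscale c3 d3)) (vadd O (vscale c4 d4)).
Proof.
  intros [HDD [P1 [P2 P3]]] [Hb4 [N1 [N2 N3]]].
  set (D := det3 d1 d2 d3) in *.
  assert (HD : D <> 0) by (intros E; rewrite E in HDD; lra).
  set (a1 := det3 d2 d3 d4 * D); set (a2 := det3 d1 d3 d4 * D);
    set (a3 := det3 d1 d2 d4 * D); set (a4 := D * D).
  assert (Hrel : vadd (vscale a1 d1) (vscale a3 d3) = vadd (vscale a2 d2) (vscale a4 d4))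
    by (unfold a1, a2, a3, a4, D; vext; ring).
  assert (Hang := convex_angle_of_relation O d1 d2 d3 d4 a1 a2 a3 a4 P1 P2 P3 HDD HD Hrel).
  exists (a1 + a3), (a2 + a4), (a1 + a3), (a2 + a4).
  do 4 (split; [unfold a1, a2, a3, a4; lra |]).
  split; [exact Hang | exists t0].
  set (v := vsub (vscale t0 e3) (vscale b4 d4)) in *.
  set (beta1 := det3 v d2 d3 / D); set (beta2 := det3 d1 v d3 / D);
    set (beta3 := det3 d1 d2 v / D).
  assert (Hv : vscale t0 e3 =
    vadd (vscale beta1 d1) (vadd (vscale beta2 d2) (vadd (vscale beta3 d3) (vscale b4 d4)))).
  { pose proof (cramer d1 d2 d3 v HD) as Hc. fold D beta1 beta2 beta3 in Hc.
    assert (Ev : v = vsub (vscale t0 e3) (vscale b4 d4)) by reflexivity.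
    clearbody beta1 beta2 beta3 v. vcoords; vext; lra. }
  replace (vadd O (vscale t0 e3)) with
    (cone_point O (beta1 / (a1 + a3)) (beta2 / (a2 + a4)) (beta3 / (a1 + a3)) (b4 / (a2 + a4))
       (vsub (vadd O (vscale (a1 + a3) d1)) O) (vsub (vadd O (vscale (a2 + a4) d2)) O)
       (vsub (vadd O (vscale (a1 + a3) d3)) O) (vsub (vadd O (vscale (a2 + a4) d4)) O)).
  2: { rewrite Hv; unfold cone_point; vext; field; unfold a1, a2, a3, a4; lra. }
  destruct Hang as [[Hnc _] Hout].
  apply cone_point_interior; [apply apex_off_plane_iff; tauto | ..];
    apply Rdiv_lt_0_compat; try (unfold a1, a2, a3, a4; lra);
    apply div_pos_of_mul_pos; assumption.
Qed.

Lemma frame_perturb (d1 d2 d3 d4 w1 w2 w3 w4 : vec3) (t0 b4 : R) :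
  convex_frame d1 d2 d3 d4 -> admissible_frame d1 d2 d3 d4 t0 b4 ->
  near0 (fun t =>
    convex_frame (vadd d1 (vscale t w1)) (vadd d2 (vscale t w2))
                 (vadd d3 (vscale t w3)) (vadd d4 (vscale t w4)) /\
    admissible_frame (vadd d1 (vscale t w1)) (vadd d2 (vscale t w2))
                     (vadd d3 (vscale t w3)) (vadd d4 (vscale t w4)) t0 b4).
Proof.
  unfold convex_frame, admissible_frame. intros Hc Ha.
  repeat apply near0_and;
    (apply near0_pos;
      [ unfold det3, vdot, vcross, vadd, vsub, vscale, e3; simpl; reg
      | cbv beta; rewrite ?vshift0; tauto ]).
Qed.

Lemma noncollinear_neq (A B C : vec3) : noncollinear A B C -> A <> B /\ B <> C.
Proof. intros H; split; intros E; subst; apply H; vext; ring. Qed.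

Lemma convex_quad_in_plane (A B C D : vec3) : convex_quad A B C D -> in_plane A B C D.
Proof.
  intros [_ [s [u [Hs [Hu E]]]]]. exists (1 - 1 / u), (s / u).
  vcoords; vext; apply (Rmult_eq_reg_l u); try lra; field_simplify; lra.
Qed.

Lemma corners_in_face_plane (A B C D O Qa Qb : vec3) :
  convex_quad A B C D -> same_plane A B C O Qa Qb ->
  in_plane O Qa Qb A /\ in_plane O Qa Qb B /\ in_plane O Qa Qb C /\ in_plane O Qa Qb D.
Proof.
  intros Hq HS. repeat split; apply HS.
  - exists 0, 0; vext; ring.
  - exists 1, 0; vext; ring.
  - exists 0, 1; vext; ring.
  - now apply convex_quad_in_plane.
Qed.

Lemma common_edge (O Qa Qb Qc G : vec3) : det3 (vsub Qa O) (vsub Qb O) (vsub Qc O) <> 0 ->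
  in_plane O Qa Qb G -> in_plane O Qb Qc G -> exists y, vsub G O = vscale y (vsub Qb O).
Proof.
  intros HD [x [y E]] [x' [y' E']]. exists y.
  apply (span_inter _ _ _ _ x y x' y' HD); [rewrite E | rewrite E']; vext; ring.
Qed.

Lemma edge_through (O Qa Qb Qc G : vec3) : det3 (vsub Qa O) (vsub Qb O) (vsub Qc O) <> 0 ->
  in_plane O Qa Qb G -> in_plane O Qb Qc G -> G <> O ->
  exists l, vsub Qb O = vscale l (vsub G O).
Proof.
  intros HD Ha Hc HG. destruct (common_edge _ _ _ _ _ HD Ha Hc) as [y Hy].
  destruct (Req_dec y 0) as [-> | Hy0].
  - exfalso; apply HG. vcoords; vext; lra.
  - exists (/ y). rewrite Hy; vext; field; exact Hy0.
Qed.

Lemma apex_of_planes (O Q1 Q2 Q3 Q4 P : vec3) :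
  convex_frame (vsub Q1 O) (vsub Q2 O) (vsub Q3 O) (vsub Q4 O) ->
  in_plane O Q1 Q2 P -> in_plane O Q2 Q3 P -> in_plane O Q4 Q1 P -> P = O.
Proof.
  intros Hf H12 H23 [x [y E41]].
  assert (HD : det3 (vsub Q1 O) (vsub Q2 O) (vsub Q3 O) <> 0) by apply (convex_frame_det3_neq0 _ _ _ _ Hf).
  assert (HD' : det3 (vsub Q2 O) (vsub Q4 O) (vsub Q1 O) <> 0).
  { replace (det3 _ _ _) with (det3 (vsub Q4 O) (vsub Q1 O) (vsub Q2 O)) by (vunfold; ring).
    apply (convex_frame_det3_neq0 _ _ _ _ Hf). }
  destruct (common_edge _ _ _ _ _ HD H12 H23) as [y2 E2].
  assert (E : vsub P O = vscale 0 (vsub Q4 O)).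
  { apply (span_inter _ _ _ _ y2 0 x y HD'); [rewrite E2 | rewrite E41]; vext; ring. }
  vcoords; vext; lra.
Qed.

Lemma vertex_star (F : net) (i j : nat) (O Q1 Q2 Q3 Q4 : vec3) :
  convex_quad (F i j) (F (S i) j) (F (S i) (S j)) (F i (S j)) ->
  convex_quad (F (S i) j) (F (S (S i)) j) (F (S (S i)) (S j)) (F (S i) (S j)) ->
  convex_quad (F (S i) (S j)) (F (S (S i)) (S j)) (F (S (S i)) (S (S j))) (F (S i) (S (S j))) ->
  convex_quad (F i (S j)) (F (S i) (S j)) (F (S i) (S (S j))) (F i (S (S j))) ->
  convex_frame (vsub Q1 O) (vsub Q2 O) (vsub Q3 O) (vsub Q4 O) ->
  face_plane_eq F i j O Q1 Q2 -> face_plane_eq F (S i) j O Q2 Q3 ->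
  face_plane_eq F (S i) (S j) O Q3 Q4 -> face_plane_eq F i (S j) O Q4 Q1 ->
  O = F (S i) (S j) /\
  (exists l1, vsub Q1 O = vscale l1 (vsub (F i (S j)) O)) /\
  (exists l2, vsub Q2 O = vscale l2 (vsub (F (S i) j) O)) /\
  (exists l3, vsub Q3 O = vscale l3 (vsub (F (S (S i)) (S j)) O)) /\
  (exists l4, vsub Q4 O = vscale l4 (vsub (F (S i) (S (S j))) O)).
Proof.
  intros q1 q2 q3 q4 Hf P1 P2 P3 P4.
  destruct (corners_in_face_plane _ _ _ _ _ _ _ q1 P1) as [_ [A2 [A3 A4]]].
  destruct (corners_in_face_plane _ _ _ _ _ _ _ q2 P2) as [B1 [_ [B3 B4]]].
  destruct (corners_in_face_plane _ _ _ _ _ _ _ q3 P3) as [C1 [C2 [_ C4]]].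
  destruct (corners_in_face_plane _ _ _ _ _ _ _ q4 P4) as [D1 [D2 [D3 _]]].
  assert (HO : F (S i) (S j) = O) by exact (apex_of_planes _ _ _ _ _ _ Hf A3 B4 D2).
  destruct (convex_frame_det3_neq0 _ _ _ _ Hf) as [N1 [N2 [N3 N4]]].
  destruct (noncollinear_neq _ _ _ (proj1 q1)) as [_ G2].
  destruct (noncollinear_neq _ _ _ (proj1 q3)) as [G3 _].
  destruct (noncollinear_neq _ _ _ (proj1 q4)) as [G1 G4].
  rewrite HO in G1, G2, G3, G4.
  split; [now symmetry |].
  split; [| split; [| split]]; eapply edge_through; eauto.
Qed.

Lemma same_plane_scale (X Y Z O d d' : vec3) (c c' : R) : c <> 0 -> c' <> 0 ->
  same_plane X Y Z O (vadd O d) (vadd O d') ->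
  same_plane X Y Z O (vadd O (vscale c d)) (vadd O (vscale c' d')).
Proof.
  intros Hc Hc' H P. split; intro HP.
  - apply H in HP as [s [u ->]]. exists (s / c), (u / c'). vext; field; auto.
  - apply H. destruct HP as [s [u ->]]. exists (s * c), (u * c'). vext; ring.
Qed.

Lemma same_plane_moved_face (phi a1 a2 : R) (b : vec3) (t lam lam' c c' : R)
    (X Y Z P G G' Q Q' : vec3) :
  same_plane X Y Z P Q Q' ->
  vsub Q P = vscale lam (vsub G P) -> vsub Q' P = vscale lam' (vsub G' P) -> c <> 0 -> c' <> 0 ->
  let V := iso_congruence phi a1 a2 b in
  let P' := vadd P (vscale t (V P)) in
  same_plane (vadd X (vscale t (V X))) (vadd Y (vscale t (V Y))) (vadd Z (vscale t (V Z))) P'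
    (vadd P' (vscale c (vadd (vsub Q P) (vscale t (vscale lam (vsub (V G) (V P)))))))
    (vadd P' (vscale c' (vadd (vsub Q' P) (vscale t (vscale lam' (vsub (V G') (V P))))))).
Proof.
  intros HS E E' Hc Hc' V P'.
  apply same_plane_scale; [exact Hc | exact Hc' |].
  assert (HQ : forall Q0 G0 l0, vsub Q0 P = vscale l0 (vsub G0 P) ->
            vadd P' (vadd (vsub Q0 P) (vscale t (vscale l0 (vsub (V G0) (V P))))) =
            iso_motion phi a1 a2 b t Q0).
  { intros Q0 G0 l0 E0.
    assert (EQ : Q0 = vadd P (vscale l0 (vsub G0 P))) by (vcoords; vext; lra).
    rewrite E0, EQ. unfold P', V, iso_motion, iso_congruence. vext; ring. }
  rewrite (HQ Q G lam E), (HQ Q' G' lam' E').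
  exact (same_plane_iso_motion phi a1 a2 b t _ _ _ _ _ _ HS).
Qed.

Definition moved (F Vf : net) (t : R) : net := fun i j => vadd (F i j) (vscale t (Vf i j)).

Definition iso_on_faces (m n : nat) (F Vf : net) : Prop :=
  forall k l, (k < m)%nat -> (l < n)%nat ->
    exists (phi c1 c2 : R) (b : vec3),
      forall i j, (i = k \/ i = S k) -> (j = l \/ j = S l) ->
        Vf i j = iso_congruence phi c1 c2 b (F i j).

Lemma is_net_moved (m n : nat) (F Vf : net) (t : R) :
  is_net m n F -> iso_on_faces m n F Vf -> is_net m n (moved F Vf t).
Proof.
  intros HN HV i j Hi Hj. destruct (HV i j Hi Hj) as [phi [a1 [a2 [b Hb]]]].
  unfold moved; rewrite !Hb by auto.
  exact (convex_quad_iso_motion phi a1 a2 b t _ _ _ _ (HN i j Hi Hj)).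
Qed.

Lemma dual_convex_at_moved (m n : nat) (F Vf : net) (i j : nat) :
  dual_convex_net m n F -> iso_on_faces m n F Vf -> (0 < i < m)%nat -> (0 < j < n)%nat ->
  near0 (fun t => dual_convex_at (moved F Vf t) i j).
Proof.
  intros [HN [_ [_ HDC]]] HV Hi Hj.
  destruct (HDC i j Hi Hj) as [O [Q1 [Q2 [Q3 [Q4 [Hang [Hadm [P1 [P2 [P3 P4]]]]]]]]]].
  destruct i as [|i]; [lia |]; destruct j as [|j]; [lia |]; simpl pred in *.
  destruct (frame_of_angle _ _ _ _ _ Hang Hadm) as [Hf [t0 [b4 Ha]]].
  destruct (vertex_star F i j O Q1 Q2 Q3 Q4 (HN i j ltac:(lia) ltac:(lia))
              (HN (S i) j ltac:(lia) ltac:(lia)) (HN (S i) (S j) ltac:(lia) ltac:(lia))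
              (HN i (S j) ltac:(lia) ltac:(lia)) Hf P1 P2 P3 P4)
    as [-> [[l1 E1] [[l2 E2] [[l3 E3] [l4 E4]]]]].
  eapply near0_impl; [| exact (frame_perturb _ _ _ _
      (vscale l1 (vsub (Vf i (S j)) (Vf (S i) (S j))))
      (vscale l2 (vsub (Vf (S i) j) (Vf (S i) (S j))))
      (vscale l3 (vsub (Vf (S (S i)) (S j)) (Vf (S i) (S j))))
      (vscale l4 (vsub (Vf (S i) (S (S j))) (Vf (S i) (S j)))) t0 b4 Hf Ha)].
  intros t [Hf' Ha'].
  destruct (angle_of_frame _ _ _ _ _ _ (moved F Vf t (S i) (S j)) Hf' Ha')
    as [c1 [c2 [c3 [c4 [H1 [H2 [H3 [H4 [Hang' Hadm']]]]]]]]].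
  do 5 eexists. split; [exact Hang' | split; [exact Hadm' |]].
  simpl pred; unfold face_plane_eq, moved.
  split; [| split; [| split]].
  - destruct (HV i j ltac:(lia) ltac:(lia)) as [phi [a1 [a2 [b Hb]]]].
    rewrite !Hb by auto. apply same_plane_moved_face; auto; lra.
  - destruct (HV (S i) j ltac:(lia) ltac:(lia)) as [phi [a1 [a2 [b Hb]]]].
    rewrite !Hb by auto. apply same_plane_moved_face; auto; lra.
  - destruct (HV (S i) (S j) ltac:(lia) ltac:(lia)) as [phi [a1 [a2 [b Hb]]]].
    rewrite !Hb by auto. apply same_plane_moved_face; auto; lra.
  - destruct (HV i (S j) ltac:(lia) ltac:(lia)) as [phi [a1 [a2 [b Hb]]]].
    rewrite !Hb by auto. apply same_plane_moved_face; auto; lra.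
Qed.

Theorem lemma2 (m n : nat) (F Vf : net) :
  dual_convex_net m n F ->
  (forall k l, (k < m)%nat -> (l < n)%nat ->
     exists (phi c1 c2 : R) (b : vec3),
       forall i j, (i = k \/ i = S k) -> (j = l \/ j = S l) ->
         Vf i j = iso_congruence phi c1 c2 b (F i j)) ->
  exists delta : R, 0 < delta /\
    forall t : R, Rabs t < delta ->
      dual_convex_net m n (fun i j => vadd (F i j) (vscale t (Vf i j))).
Proof.
  intros Hdc HV. change (iso_on_faces m n F Vf) in HV.
  assert (Hnear : near0 (fun t => forall i, (i < m)%nat -> forall j, (j < n)%nat ->
                    (0 < i)%nat -> (0 < j)%nat -> dual_convex_at (moved F Vf t) i j)).
  { apply near0_forall_lt; intros i Hi; apply near0_forall_lt; intros j Hj.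
    destruct (Nat.eq_dec i 0) as [-> | Hi0]; [exists 1; split; [lra | intros; lia] |].
    destruct (Nat.eq_dec j 0) as [-> | Hj0]; [exists 1; split; [lra | intros; lia] |].
    eapply near0_impl; [| apply (dual_convex_at_moved m n F Vf i j Hdc HV); lia].
    auto. }
  destruct Hnear as [d [Hd Hnear]]. exists d; split; [exact Hd |].
  intros t Ht. change (dual_convex_net m n (moved F Vf t)).
  destruct Hdc as [HN [Hm [Hn _]]].
  split; [now apply is_net_moved | split; [exact Hm | split; [exact Hn |]]].
  intros i j Hi Hj; apply (Hnear t Ht); lia.
Qed.
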